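(* Let $(X_n,\|\cdot\|_n)_{n\ge1}$ be a sequence of Banach spaces, let $(X,\|\cdot\|)$ be the space defined in the context, and let $x=(x_1,x_2,\dots)$ be a nonzero vector of $X$. Then there exist $k\ge2$ and a sequence $(d_n)_{n\ge1}\subseteq(0,1]$ such that $d_n=1-\frac1{n+1}$ for all $n\ge k$ and $$\|x\|=\sum_{n=1}^\infty d_n\|x_n\|_n.$$
   Context: $c_{00}((X_n))$ is the vector space of sequences $(x_1,x_2,\dots)$ with $x_k\in X_k$ and only finitely many $x_k\ne0$; $(x_1,\dots,x_n)$ denotes $(x_1,\dots,x_n,0,0,\dots)$. On $c_{00}((X_n))$ define inductively $\|(x_1)\|=\|x_1\|_1$ (the norm of $X_1$) and, for $n\ge2$, $$\|(x_1,\dots,x_n)\|=\Big(1-\tfrac{1}{n+1}\Big)\big(\|x_n\|_n+\|(x_1,\dots,x_{n-1})\|\big)+\tfrac{1}{n+1}\max\Big\{\tfrac{\|x_n\|_n}{n},\ \|(x_1,\dots,x_{n-1})\|\Big\}.$$ $X$ is the completion of $(c_{00}((X_n)),\|\cdot\|)$, identified with the space of sequences $x=(x_n)$, $x_n\in X_n$, with $\sum_n\|x_n\|_n<\infty$, where $\|x\|=\lim_k\|(x_1,\dots,x_k)\|$. *)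

From HB Require Import structures.
From mathcomp Require Import all_boot all_order all_algebra.
From mathcomp Require Import all_classical all_reals all_analysis.
Set Implicit Arguments. Unset Strict Implicit. Unset Printing Implicit Defensive.
Import Order.TTheory GRing.Theory Num.Theory.
Import numFieldNormedType.Exports.
Local Open Scope classical_set_scope.
Local Open Scope ring_scope.

(* Given a n = ||x_n||_n (1-indexed, a 0 unused), [pnorm a n] is the norm
   ||(x_1,...,x_n)|| from the inductive definition:
   ||(x_1)|| = ||x_1||_1 and for n >= 2
   ||(x_1..x_n)|| = (1-1/(n+1)) (||x_n|| + ||(x_1..x_{n-1})||)
                   + 1/(n+1) max(||x_n||/n, ||(x_1..x_{n-1})||).
   pnorm a 0 = 0 (empty tuple). *)
Fixpoint pnorm {R : realType} (a : nat -> R) (n : nat) : R :=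
  match n with
  | 0%N => 0
  | S m =>
    match m with
    | 0%N => a 1%N
    | S _ => (1 - 1 / (n.+1)%:R) * (a n + pnorm a m)
             + 1 / (n.+1)%:R * Num.max (a n / n%:R) (pnorm a m)
    end
  end.

Definition Xnorm {R : realType} (X : nat -> normedModType R)
  (x : forall n, X n) : R :=
  lim (pnorm (fun n => `|x n|) @ \oo).

From HB Require Import structures.
From mathcomp Require Import all_boot all_order all_algebra.
From mathcomp Require Import all_classical all_reals all_analysis.
From mathcomp Require Import ring lra zify.
Set Implicit Arguments.
Unset Strict Implicit.
Unset Printing Implicit Defensive.
Import Order.TTheory GRing.Theory Num.Theory.
Import numFieldNormedType.Exports.
Local Open Scope classical_set_scope.
Local Open Scope ring_scope.

(* Write p_n = ||(x_1,...,x_n)||.  Each step of the recursion is a convex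
   combination of ||x_n|| + p_(n-1) and max(||x_n||/n, p_(n-1)), so by
   induction p_n is a combination of the ||x_i|| with coefficients in (0, 1].
   Since ||x_n|| -> 0 while p_n is nondecreasing and eventually positive, the
   maximum is eventually p_(n-1); from then on the recursion reads
   p_n = p_(n-1) + (1 - 1/(n+1)) ||x_n||, so later coefficients are exactly
   1 - 1/(n+1) and the earlier ones no longer change. *)

Lemma inv_natSS_gt0_lt1 (R : numFieldType) n :
  0 < (1 / (n.+2)%:R : R) < 1.
Proof.
rewrite divr_gt0 ?ltr0n //=.
by rewrite ltr_pdivrMr ?ltr0n // mul1r ltr1n.
Qed.

Lemma ler_wdivSn (R : numFieldType) (x : R) n : 0 <= x -> x / (n.+1)%:R <= x.
Proof. by move=> x_ge0; rewrite ler_pdivrMr ?ltr0n // ler_peMr // ler1n. Qed.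

Lemma cvgn_sum1_cvg0 (K : numFieldType) (V : normedModType K) (u : V ^nat) :
  cvgn (fun N => \sum_(1 <= i < N) u i) -> (fun n => u n.+1) @ \oo --> 0.
Proof.
move=> sum_cvg; apply: cvg_series_cvg_0.
pose s N := \sum_(1 <= i < N) u i.
have -> : series (fun n => u n.+1) = (fun N => s N.+1).
  by apply: funext => N; rewrite /s big_add1.
by apply/cvg_ex; exists (limn s); rewrite (cvg_shiftS s).
Qed.

Section partial_norms.
Variables (R : realType) (a : nat -> R).
Hypothesis a_ge0 : forall n, 0 <= a n.

Lemma pnormS n : (1 <= n)%N -> pnorm a n.+1 =
  (1 - 1 / (n.+2)%:R) * (a n.+1 + pnorm a n)
  + 1 / (n.+2)%:R * Num.max (a n.+1 / (n.+1)%:R) (pnorm a n).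
Proof. by case: n. Qed.

Lemma pnorm_ge0 n : 0 <= pnorm a n.
Proof.
elim: n => [|[|n] IH] //; first exact: a_ge0.
rewrite pnormS //; move/andP: (inv_natSS_gt0_lt1 R n.+1) => [c_gt0 c_lt1].
set c := 1 / _ in c_gt0 c_lt1 *.
have max_ge0 : 0 <= Num.max (a n.+2 / (n.+2)%:R) (pnorm a n.+1).
  by rewrite le_max IH orbT.
have := a_ge0 n.+2; nra.
Qed.

Lemma pnorm_nondecreasing : nondecreasing_seq (pnorm a).
Proof.
apply: homo_leq => [|m n p|]; [exact: lexx | exact: le_trans |].
case=> [|n]; first exact: a_ge0.
rewrite (pnormS (n := n.+1)) //.
move/andP: (inv_natSS_gt0_lt1 R n.+1) => [c_gt0 c_lt1].
set c := 1 / _ in c_gt0 c_lt1 *.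
have max_ge : pnorm a n.+1 <= Num.max (a n.+2 / (n.+2)%:R) (pnorm a n.+1).
  by rewrite le_max lexx orbT.
have := a_ge0 n.+2; nra.
Qed.

Lemma pnorm_gt0 n : (1 <= n)%N -> 0 < a n -> 0 < pnorm a n.
Proof.
case: n => [|[|n]] // _ an_gt0; rewrite pnormS //.
move/andP: (inv_natSS_gt0_lt1 R n.+1) => [c_gt0 c_lt1].
set c := 1 / _ in c_gt0 c_lt1 *.
have max_ge0 : 0 <= Num.max (a n.+2 / (n.+2)%:R) (pnorm a n.+1).
  by rewrite le_max pnorm_ge0 orbT.
have := pnorm_ge0 n.+1; nra.
Qed.

Lemma pnorm_le_sum n : pnorm a n <= \sum_(1 <= i < n.+1) a i.
Proof.
elim: n => [|[|n] IH]; first by rewrite big_geq.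
  by rewrite big_nat1.
rewrite pnormS // (big_nat_recr n.+2) // [X in _ <= X]/=.
move/andP: (inv_natSS_gt0_lt1 R n.+1) => [c_gt0 c_lt1].
set c := 1 / _ in c_gt0 c_lt1 *.
have max_le :
    Num.max (a n.+2 / (n.+2)%:R) (pnorm a n.+1) <= a n.+2 + pnorm a n.+1.
  rewrite ge_max lerDr a_ge0 andbT.
  by rewrite (le_trans (ler_wdivSn _ (a_ge0 _))) // lerDl pnorm_ge0.
have := a_ge0 n.+2; nra.
Qed.

Lemma pnorm_cvgn : cvgn (fun N => \sum_(1 <= i < N) a i) -> cvgn (pnorm a).
Proof.
move=> sum_cvg; apply: nondecreasing_is_cvgn; first exact: pnorm_nondecreasing.
exists (limn (fun N => \sum_(1 <= i < N) a i)) => _ [n _ <-].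
apply: (le_trans (pnorm_le_sum n)); apply: nondecreasing_cvgn_le => // p q pq.
case: p pq => [|p] pq; first by rewrite big_geq ?sumr_ge0.
by rewrite (big_cat_nat _ pq) //= lerDl sumr_ge0.
Qed.

Lemma pnorm_weighted n : (1 <= n)%N -> exists d : nat -> R,
  (forall i, (1 <= i)%N -> 0 < d i <= 1) /\
  pnorm a n = \sum_(1 <= i < n.+1) d i * a i.
Proof.
elim: n => [|[|n] IH] // _.
  exists (fun=> 1); split; first by move=> *; rewrite ltr01 lexx.
  by rewrite big_nat1 mul1r.
rewrite pnormS //; have [d [d_bounds ->]] := IH isT.
move/andP: (inv_natSS_gt0_lt1 R n.+1) => [c_gt0 c_lt1].
set c := 1 / _ in c_gt0 c_lt1 *.
set p := \sum_(1 <= i < n.+2) d i * a i.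
have ce_bounds : 0 <= c / (n.+2)%:R <= c.
  by rewrite divr_ge0 ?ler0n ?ler_wdivSn // ltW.
have [a_le|p_lt] := leP (a n.+2 / (n.+2)%:R) p.
- exists (fun i => if i == n.+2 then 1 - c else d i); split.
    by move=> i /d_bounds; case: eqP => _ // _; apply/andP; split; lra.
  rewrite big_nat_recr //= eqxx big_nat_cond.
  rewrite (eq_bigr (fun i => d i * a i)); last first.
    by move=> i; rewrite andbT => /andP[_ /ltn_eqF ->].
  by rewrite -big_nat_cond -/p; lra.
- exists (fun i => if i == n.+2 then 1 - c + c / (n.+2)%:R else (1 - c) * d i).
  split.
    move=> i /d_bounds /andP[di_gt0 di_le1]; case: eqP => _.
      by move: ce_bounds; set e := c / _ => /andP[? ?]; apply/andP; split; lra.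
    by apply/andP; split; nra.
  rewrite big_nat_recr //= eqxx big_nat_cond.
  rewrite (eq_bigr (fun i => (1 - c) * (d i * a i))); last first.
    by move=> i; rewrite andbT => /andP[_ /ltn_eqF ->]; rewrite mulrA.
  rewrite -big_nat_cond -mulr_sumr -/p; ring.
Qed.

Lemma pnormS_small n : (1 <= n)%N -> a n.+1 <= pnorm a n ->
  pnorm a n.+1 = pnorm a n + (1 - 1 / (n.+2)%:R) * a n.+1.
Proof.
move=> n_ge1 small; rewrite pnormS // max_r; first ring.
exact: le_trans (ler_wdivSn _ (a_ge0 _)) small.
Qed.

Lemma pnorm_weighted_tail k : (1 <= k)%N ->
  (forall n, (k <= n)%N -> a n.+1 <= pnorm a n) ->
  exists d : nat -> R,
    [/\ forall i, (1 <= i)%N -> 0 < d i <= 1,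
        forall i, (k < i)%N -> d i = 1 - 1 / (i.+1)%:R &
        forall n, (k <= n)%N -> pnorm a n = \sum_(1 <= i < n.+1) d i * a i].
Proof.
move=> k_ge1 small; have [d [d_bounds pk]] := pnorm_weighted k_ge1.
exists (fun i => if (i <= k)%N then d i else 1 - 1 / (i.+1)%:R); split.
- move=> [|i] // i_ge1; case: ifP => _; first exact: d_bounds.
  move/andP: (inv_natSS_gt0_lt1 R i) => [c_gt0 c_lt1].
  by set c := 1 / _ in c_gt0 c_lt1 *; apply/andP; split; lra.
- by move=> i; rewrite ltnNge => /negPf ->.
- move=> n /subnK <-; elim: (n - k)%N => [|j IH].
    rewrite add0n pk; apply: eq_big_nat => i /andP[_ i_le].
    by rewrite ifT.
  rewrite addSn pnormS_small ?small ?leq_addl //; last by lia.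
  by rewrite IH [in RHS]big_nat_recr //= ifN //; lia.
Qed.

End partial_norms.

Theorem corollary1p6 (R : realType) (X : nat -> completeNormedModType R)
  (x : forall n, X n)
  (hsum : cvg ((\sum_(1 <= n < N) `|x n|) @[N --> \oo]))
  (hnz : exists n, (1 <= n)%N /\ x n <> 0) :
  exists k : nat, (2 <= k)%N /\
    exists d : nat -> R,
      (forall n, (1 <= n)%N -> 0 < d n <= 1) /\
      (forall n, (k <= n)%N -> d n = 1 - 1 / (n.+1)%:R) /\
      Xnorm x = limn (fun N => \sum_(1 <= n < N) (d n * `|x n|)).
Proof.
set a := fun n => `|x n|.
have a_ge0 n : 0 <= a n by exact: normr_ge0.
have a_to0 : (fun n => a n.+1) @ \oo --> 0 by exact: cvgn_sum1_cvg0.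
have [m [m_ge1 xm_neq0]] := hnz.
have pm_gt0 : 0 < pnorm a m.
  by apply: pnorm_gt0; rewrite // normr_gt0; exact/eqP.
have [N0 _ a_small] := proj1 (cvgr0Pnorm_lt _) a_to0 _ pm_gt0.
have small n : (maxn N0 m <= n)%N -> a n.+1 <= pnorm a n.
  move=> n_ge; have /= := a_small n; rewrite ger0_norm // => a_lt.
  apply: le_trans (ltW (a_lt _)) _; first by lia.
  by apply: (pnorm_nondecreasing a_ge0); lia.
have [|d [d_bounds d_tail pd]] := pnorm_weighted_tail a_ge0 _ small.
  by lia.
exists (maxn N0 m).+1; split; first by lia.
exists d; split => //; split => //.
apply/esym/cvg_lim => //; rewrite -cvg_shiftS.
apply: cvg_trans (pnorm_cvgn a_ge0 hsum); apply: near_eq_cvg.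
by near=> n; rewrite /= pd //; near: n; exists (maxn N0 m).
Unshelve. all: by end_near.
Qed.
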